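(* Let $n\ge2$, $\mathbf p^0\in\Delta_n$, $\mathbf p^{t+1}=F(\mathbf p^t)$. Then the sequence $L^t=\sum_k(p^t_k)^2$ converges, i.e. $L^\infty=\lim_{t\to\infty}L^t$ exists.
   Context: $\Delta_n=\{\mathbf p\in\mathbb R^n: p_i\ge 0,\ \sum_i p_i=1\}$. For $\mathbf p\in\Delta_n$, $L(\mathbf p)=\sum_{k}p_k^2$ and $F(\mathbf p)_i=p_i\frac{n-p_i}{n-L(\mathbf p)}$. *)

From mathcomp Require Import all_boot all_order all_algebra.
From mathcomp Require Import all_classical all_reals all_analysis.
Set Implicit Arguments. Unset Strict Implicit. Unset Printing Implicit Defensive.
Import Order.TTheory GRing.Theory Num.Theory.
Local Open Scope ring_scope.

Definition simplex (R : realType) (n : nat) (p : 'I_n -> R) : Prop :=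
  (forall i, 0 <= p i) /\ \sum_(i < n) p i = 1.

Definition Lsq (R : realType) (n : nat) (p : 'I_n -> R) : R :=
  \sum_(k < n) p k ^+ 2.

Definition Fmap (R : realType) (n : nat) (p : 'I_n -> R) : 'I_n -> R :=
  fun i => p i * (n%:R - p i) / (n%:R - Lsq p).

Definition Forbit (R : realType) (n : nat) (p0 : 'I_n -> R) (t : nat) : 'I_n -> R :=
  iter t (@Fmap R n) p0.

From mathcomp Require Import all_boot all_order all_algebra.
From mathcomp Require Import all_classical all_reals all_analysis.
From mathcomp Require Import ring lra.
Import Order.TTheory GRing.Theory Num.Theory numFieldNormedType.Exports.
Local Open Scope ring_scope.

(* F maps the simplex to itself, and along an orbit L^t is nonincreasing and
   nonnegative, hence convergent.  Monotonicity comes from the identity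
     L (n - L)^2 - sum_i (p_i (n - p_i))^2 = sum_i p_i (p_i - L)^2 (2n - 2L - p_i),
   valid on the simplex, whose right-hand side is nonnegative since p_i <= 1 <= n,
   while the left-hand side is (n - L)^2 (L(p) - L(F p)). *)

Section Simplex.
Context {R : realType} {n : nat}.
Implicit Types p : 'I_n -> R.

Lemma simplex_le1 {p} i : simplex p -> p i <= 1.
Proof.
case=> p_ge0 <-; rewrite (bigD1 i) //= lerDl.
by apply: sumr_ge0 => j _; exact: p_ge0.
Qed.

Lemma Lsq_ge0 p : 0 <= Lsq p.
Proof. by apply: sumr_ge0 => i _; exact: sqr_ge0. Qed.

Lemma Lsq_le1 {p} : simplex p -> Lsq p <= 1.
Proof.
move=> sp; have [p_ge0 <-] := sp; apply: ler_sum => i _.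
have := simplex_le1 i sp; have := p_ge0 i; rewrite expr2; nra.
Qed.

Lemma sum_mul_subr {p} (c : R) : \sum_(i < n) p i = 1 ->
  \sum_(i < n) p i * (c - p i) = c - Lsq p.
Proof.
move=> p_sum1; rewrite /Lsq.
under eq_bigr => i _ do rewrite mulrBr -expr2 [p i * _]mulrC.
by rewrite sumrB -mulr_sumr p_sum1 mulr1.
Qed.

Lemma Lsq_gap {p} (c : R) : \sum_(i < n) p i = 1 ->
  Lsq p * (c - Lsq p) ^+ 2 - \sum_(i < n) (p i * (c - p i)) ^+ 2 =
  \sum_(i < n) p i * (p i - Lsq p) ^+ 2 * (2%:R * c - 2%:R * Lsq p - p i).
Proof.
move=> p_sum1; set m := Lsq p.
set g := c ^+ 2 - 4%:R * c * m + 3%:R * m ^+ 2.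
(* The correction term [g (m p_i - p_i^2)] sums to zero, as [sum p_i = 1] and
   [sum p_i^2 = m]; with it the identity holds termwise. *)
have g_sum0 : \sum_(i < n) g * (m * p i - p i ^+ 2) = 0.
  by rewrite -mulr_sumr sumrB -mulr_sumr p_sum1 mulr1 subrr mulr0.
transitivity (\sum_(i < n) (g * (m * p i - p i ^+ 2) +
  p i * (p i - m) ^+ 2 * (2%:R * c - 2%:R * m - p i))); last first.
  by rewrite big_split /= g_sum0 add0r.
have -> : m * (c - m) ^+ 2 = \sum_(i < n) p i * (m * (c - m) ^+ 2).
  by rewrite -mulr_suml p_sum1 mul1r.
by rewrite -sumrB; apply: eq_bigr => i _; rewrite /g; ring.
Qed.

Lemma ForbitS (p0 : 'I_n -> R) t : Forbit p0 t.+1 = Fmap (Forbit p0 t).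
Proof. by []. Qed.

Hypothesis n_gt1 : (1 < n)%N.

Lemma Fmap_den_gt0 {p} : simplex p -> 0 < n%:R - Lsq p.
Proof.
move=> sp; have := Lsq_le1 sp; have : 2 <= (n%:R : R) by rewrite (ler_nat R 2).
lra.
Qed.

Lemma Fmap_simplex {p} : simplex p -> simplex (Fmap p).
Proof.
move=> sp; have [p_ge0 p_sum1] := sp; have den_gt0 := Fmap_den_gt0 sp.
have n_ge1 : 1 <= (n%:R : R) by rewrite (ler_nat R 1) ltnW.
split=> [i|].
  apply: divr_ge0 (ltW den_gt0); apply: mulr_ge0 (p_ge0 i) _.
  by have := simplex_le1 i sp; lra.
by rewrite /Fmap -mulr_suml sum_mul_subr // divff // gt_eqF.
Qed.

Lemma Lsq_Fmap_le {p} : simplex p -> Lsq (Fmap p) <= Lsq p.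
Proof.
move=> sp; have [p_ge0 p_sum1] := sp; have den_gt0 := Fmap_den_gt0 sp.
have n_ge2 : 2 <= (n%:R : R) by rewrite (ler_nat R 2).
have gap_ge0 : 0 <= Lsq p * (n%:R - Lsq p) ^+ 2 -
                    \sum_(i < n) (p i * (n%:R - p i)) ^+ 2.
  rewrite Lsq_gap //; apply: sumr_ge0 => i _.
  apply: mulr_ge0; first exact: mulr_ge0 (p_ge0 i) (sqr_ge0 _).
  by have := simplex_le1 i sp; have := Lsq_le1 sp; lra.
have -> : Lsq (Fmap p) =
    (\sum_(i < n) (p i * (n%:R - p i)) ^+ 2) / (n%:R - Lsq p) ^+ 2.
  by rewrite /Lsq /Fmap mulr_suml; apply: eq_bigr => i _; rewrite expr_div_n.
by rewrite ler_pdivrMr ?exprn_gt0 //; lra.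
Qed.

Lemma Forbit_simplex {p0} t : simplex p0 -> simplex (Forbit p0 t).
Proof.
by move=> sp0; elim: t => [|t IH] //; rewrite ForbitS; exact: Fmap_simplex.
Qed.

End Simplex.

Theorem proposition4 (R : realType) (n : nat) (p0 : 'I_n -> R) :
  (2 <= n)%N -> simplex p0 ->
  cvgn (fun t : nat => Lsq (Forbit p0 t)).
Proof.
move=> n_gt1 sp0; apply: nonincreasing_is_cvgn.
  apply/nonincreasing_seqP => t; rewrite ForbitS.
  exact: (Lsq_Fmap_le n_gt1 (Forbit_simplex n_gt1 t sp0)).
by exists 0 => _ [t _ <-]; exact: Lsq_ge0.
Qed.
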